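(* Let $(\mathcal U,\mathcal F)$ be a strongly accessible set system satisfying the commutable property, let $S$ be a nonempty maximal solution with layered canonical order $s_1,\dots,s_{|S|}$, and let $1\le j\le |S|$. Then $T=\mathrm{complete}'(S[j],\mathcal U)$ is a maximal solution and $T\preceq' S$.
   Context: A set system is $(\mathcal U,\mathcal F)$ with $\mathcal U$ finite, $\mathcal F\subseteq 2^{\mathcal U}$, $\emptyset\in\mathcal F$; $S\in\mathcal F$ is maximal if no $Y\in\mathcal F$ has $S\subsetneq Y$. Strongly accessible: for all $X,Y\in\mathcal F$ with $X\subsetneq Y$ there is $z\in Y\setminus X$ with $X\cup\{z\}\in\mathcal F$. Commutable property: for all $X,Y\in\mathcal F$ with $X\ne\emptyset$, $X\subsetneq Y$, and $a,b\in Y\setminus X$, if $X\cup\{a\},X\cup\{b\}\in\mathcal F$ then $X\cup\{a,b\}\in\mathcal F$. Elements of $\mathcal U$ are distinct integers. For $X,A\subseteq\mathcal U$, $X^+_A=\{a\in A\setminus X: X\cup\{a\}\in\mathcal F\}$ and $X^+=X^+_{\mathcal U}$. $Z=\{x:\{x\}\in\mathcal F\}$, $\mathrm{source}(X)=\min(X\cap Z)$. Layers: for $X\in\mathcal F$ and $t\in X\cap Z$, set $B_0=\{t\}$ and $B_i=B_{i-1}\cup(B_{i-1}^+\cap X)$ for $i>0$; for $y\in X\cup X^+$ define $\mathrm{lay}^X_t(t)=0$ and, for $y\neq t$, $\mathrm{lay}^X_t(y)=\min\{i\ge1: y\in B_{i-1}^+\}$; write $\mathrm{lay}^X=\mathrm{lay}^X_{\mathrm{source}(X)}$.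 For nonempty $X\in\mathcal F$ and $A\subseteq\mathcal U$ with $X^+_A\ne\emptyset$, $\mathrm{choose}'(X,A)$ is the $y\in X^+_A$ minimizing the pair $(\mathrm{lay}^X(y),y)$ lexicographically. $\mathrm{complete}'(X,A)$: while $X^+_A\neq\emptyset$ replace $X$ by $X\cup\{\mathrm{choose}'(X,A)\}$; return $X$. The layered canonical order of a nonempty maximal $S$ is $s_1=\mathrm{source}(S)$, $s_{i+1}=\mathrm{choose}'(S[i],S)$ while $S[i]^+_S\ne\emptyset$, where $S[i]=\{s_1,\dots,s_i\}$. For maximal $S\neq T$ with layered canonical orders $(s_i),(t_i)$, let $j$ be the smallest index where the pairs $(\mathrm{lay}^S_{s_1}(s_j),s_j)$ and $(\mathrm{lay}^T_{t_1}(t_j),t_j)$ differ; $S\prec' T$ iff the former pair is lexicographically smaller; $S\preceq' T$ iff $S\prec'T$ or $S=T$. *)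

From HB Require Import structures.
From mathcomp Require Import all_boot all_order all_algebra.
Set Implicit Arguments. Unset Strict Implicit. Unset Printing Implicit Defensive.
Import Order.TTheory GRing.Theory Num.Theory.

(* The ground set U is the whole finite type T; the elements of U are
   "distinct integers" via an injective labelling lab : T -> int.
   A family F : {set {set T}} is the set system. *)

Section SetSystems.
Variables (T : finType) (lab : T -> int) (F : {set {set T}}).

Definition maximal (S : {set T}) : Prop :=
  S \in F /\ forall Y, Y \in F -> ~ (S \proper Y).

Definition strongly_accessible : Prop :=
  forall X Y, X \in F -> Y \in F -> X \proper Y ->
    exists z, z \in Y :\: X /\ X :|: [set z] \in F.

Definition commutable : Prop :=
  forall X Y, X \in F -> Y \in F -> X != set0 -> X \proper Y ->
    forall a b, a \in Y :\: X -> b \in Y :\: X ->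
      X :|: [set a] \in F -> X :|: [set b] \in F -> X :|: [set a; b] \in F.

Definition plusA (X A : {set T}) : {set T} :=
  [set a in A :\: X | X :|: [set a] \in F].

Definition Zset : {set T} := [set x | [set x] \in F].

Definition source (X : {set T}) : option T :=
  [pick x in X :&: Zset | [forall y in X :&: Zset, (lab x <= lab y)%R]].

Definition layer (X : {set T}) (t : T) (i : nat) : {set T} :=
  iter i (fun B => B :|: (plusA B setT :&: X)) [set t].

(* lay^X_t(y): 0 if y = t, otherwise min{ i >= 1 : y \in B_{i-1}^+ }.
   The B_i are increasing and contained in X ∪ {t}, hence constant for
   i >= #|T|; so it suffices to search i-1 in [0, #|T|].  If no such i
   exists the value is #|T|.+2 (an "infinite" layer). *)
Definition lay (X : {set T}) (t y : T) : nat :=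
  if y == t then 0%N
  else (find (fun i => y \in plusA (layer X t i) setT) (iota 0 #|T|.+1)).+1.

Definition layX (X : {set T}) (y : T) : nat :=
  match source X with Some t => lay X t y | None => 0%N end.

Definition pair_le (p q : nat * int) : bool :=
  (p.1 < q.1)%N || ((p.1 == q.1) && (p.2 <= q.2)%R).
Definition pair_lt (p q : nat * int) : bool :=
  (p.1 < q.1)%N || ((p.1 == q.1) && (p.2 < q.2)%R).

Definition choose' (X A : {set T}) : option T :=
  [pick y in plusA X A |
     [forall z in plusA X A, pair_le (layX X y, lab y) (layX X z, lab z)]].

(* complete'(X, A): each step adds a new element, so #|T| steps suffice. *)
Definition complete' (X A : {set T}) : {set T} :=
  iter #|T| (fun Y => match choose' Y A with Some y => Y :|: [set y] | None => Y end) X.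

Fixpoint canon_from (S : {set T}) (fuel : nat) (s : seq T) : seq T :=
  match fuel with
  | 0 => s
  | k.+1 => match choose' [set x in s] S with
            | Some y => canon_from S k (rcons s y)
            | None => s
            end
  end.

Definition canon (S : {set T}) : seq T :=
  match source S with Some t => canon_from S #|T| [:: t] | None => [::] end.

Definition prefix_set (S : {set T}) (i : nat) : {set T} :=
  [set x in take i (canon S)].

Definition canon_pairs (S : {set T}) : seq (nat * int) :=
  [seq (lay S (head x (canon S)) x, lab x) | x <- canon S].

Fixpoint seq_lt (a b : seq (nat * int)) : bool :=
  match a, b with
  | x :: a', y :: b' => if x == y then seq_lt a' b' else pair_lt x y
  | _, _ => false
  end.

Definition prec' (S T' : {set T}) : bool :=
  (S != T') && seq_lt (canon_pairs S) (canon_pairs T').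

Definition preceq' (S T' : {set T}) : bool := prec' S T' || (S == T').

End SetSystems.

From mathcomp Require Import all_boot all_order all_algebra zify.
Set Implicit Arguments. Unset Strict Implicit. Unset Printing Implicit Defensive.
Import Order.TTheory GRing.Theory Num.Theory.

(* Commutability together with strong accessibility makes extendability monotone: an
   element extending a nonempty feasible B also extends every feasible B' between B and a
   feasible W ([plusA_mono]).  Hence all layers are feasible, and the element that choose'
   picks from a prefix X of W has the same layer relative to X as relative to W.  So the
   layered canonical order of a maximal set is computed prefix by prefix, and at the first
   index where the orders of T = complete'(S[j], U) and S differ both elements are
   candidates for the same prefix, T's being the one chosen. *)

Lemma exists_rel_min (X : finType) (r : rel X) : total r -> transitive r ->
  forall P : {set X}, P != set0 -> exists2 y, y \in P & {in P, forall z, r y z}.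
Proof.
move=> r_total r_trans P /set0Pn[x Px].
have memP := mem_sort r (enum P).
have := sort_sorted r_total (enum P).
case: (sort r (enum P)) memP => [|y s] memP sorted_ys.
  by move/(_ x): memP; rewrite mem_enum Px.
exists y; first by rewrite -mem_enum -memP mem_head.
move=> z; rewrite -mem_enum -memP inE => /orP[/eqP->|zs].
  by case/orP: (r_total y y).
exact: (allP (order_path_min r_trans sorted_ys)).
Qed.

Lemma pair_le_total p q : pair_le p q || pair_le q p.
Proof.
rewrite /pair_le; case: (ltngtP p.1 q.1) => //= e.
by rewrite ?e ?eqxx /= le_total.
Qed.

Lemma pair_le_trans p q r : pair_le p q -> pair_le q r -> pair_le p r.
Proof.
rewrite /pair_le => /orP[h1|/andP[/eqP e1 h1]] /orP[h2|/andP[/eqP e2 h2]].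
- by rewrite (ltn_trans h1 h2).
- by rewrite -e2 h1.
- by rewrite e1 h2.
- by rewrite e1 e2 eqxx (le_trans h1 h2) orbT.
Qed.

Lemma pair_le_fst p q : pair_le p q -> p.1 <= q.1.
Proof. by rewrite /pair_le => /orP[/ltnW//|/andP[/eqP-> _]]. Qed.

Lemma pair_le_anti p q : pair_le p q -> pair_le q p -> p.2 = q.2.
Proof.
rewrite /pair_le => /orP[h1|/andP[/eqP e1 h1]] /orP[h2|/andP[/eqP e2 h2]].
- by move: (ltn_trans h1 h2); rewrite ltnn.
- by move: h1; rewrite e2 ltnn.
- by move: h2; rewrite e1 ltnn.
- by apply/eqP; rewrite eq_le h1 h2.
Qed.

Lemma pair_le_neq_lt p q : pair_le p q -> p.2 != q.2 -> pair_lt p q.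
Proof.
rewrite /pair_le /pair_lt => /orP[->//|/andP[e h]] ne.
by rewrite e lt_neqAle ne h orbT.
Qed.

Lemma seq_lt_take (a b : seq (nat * int)) k d : k < size a -> k < size b ->
  take k a = take k b -> pair_lt (nth d a k) (nth d b k) -> seq_lt a b.
Proof.
elim: a b k => [|x a IH] [|y b] [|k] //= ha hb.
  by move=> _ lt_xy; case: eqP => [e|//]; rewrite e /pair_lt ltnn ltxx andbF in lt_xy.
by case=> -> tk lt_k; rewrite eqxx; exact: IH ha hb tk lt_k.
Qed.

Lemma first_mismatch (X : eqType) (u s : seq X) x0 : exists k,
  [/\ k <= size u, k <= size s, take k u = take k s &
      [\/ k = size u, k = size s | nth x0 u k != nth x0 s k]].
Proof.
elim: u s => [|x u IH] s; first by exists 0; split; rewrite ?take0 //; exact: Or31.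
case: s => [|y s]; first by exists 0; split; rewrite ?take0 //; exact: Or32.
case: (eqVneq x y) => [<-|ne]; last by exists 0; split; rewrite ?take0 //; exact: Or33.
have [k [ku ks tk mis]] := IH s; exists k.+1; split => //=; first by rewrite tk.
by case: mis => [->|->|h]; [apply: Or31 | apply: Or32 | apply: Or33].
Qed.

Lemma find_agree (s : seq nat) (p q : pred nat) :
  {in take (find p s).+1 s, p =1 q} -> find q s = find p s.
Proof.
elim: s => [//|a s IH] /= pq.
have pq_a : p a = q a by apply: pq; rewrite mem_head.
rewrite -pq_a; case pa: (p a) => //; congr S; apply: IH => i si; apply: pq.
by rewrite pa /= inE si orbT.
Qed.

Section LayeredGreedy.
Variables (T : finType) (lab : T -> int) (F : {set {set T}}).
Hypotheses (lab_inj : injective lab) (F0 : set0 \in F)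
  (hSA : strongly_accessible F) (hC : commutable F).

Local Notation key X y := (layX lab F X y, lab y).

Lemma plusAE (X A : {set T}) a :
  (a \in plusA F X A) = [&& a \in A, a \notin X & X :|: [set a] \in F].
Proof. by rewrite !inE; case: (a \in A); case: (a \in X). Qed.

Lemma plusA_sub (X A B : {set T}) a : a \in plusA F X A -> a \in B -> a \in plusA F X B.
Proof. by rewrite !plusAE => /and3P[_ -> ->] ->. Qed.

Lemma plusA_eq0_sub (X W : {set T}) : X \in F -> W \in F -> X \subset W ->
  plusA F X W = set0 -> X = W.
Proof.
move=> XF WF XW plus0; apply/eqP; rewrite eqEproper XW /=; apply/negP => XW'.
have [z [/setDP[zW zX] XzF]] := hSA XF WF XW'.
have : z \in plusA F X W by rewrite plusAE zW zX.
by rewrite plus0 inE.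
Qed.

Lemma plusA_subset (X A : {set T}) : plusA F X A \subset A.
Proof. by apply/subsetP => a; rewrite plusAE => /and3P[]. Qed.

Lemma plusA_eq0_maximal (X : {set T}) : X \in F -> plusA F X setT = set0 -> maximal F X.
Proof.
move=> XF plus0; split=> // Y YF XY; have [XY' _] := properP XY.
suff eXY : X = Y by rewrite eXY properxx in XY.
apply: plusA_eq0_sub => //; apply/eqP; rewrite -subset0 -plus0.
by apply/subsetP => a aP; exact: plusA_sub aP (in_setT a).
Qed.

Lemma maximal_sub_eq (X Y : {set T}) : maximal F X -> Y \in F -> X \subset Y -> X = Y.
Proof.
move=> [_ Xmax] YF XY; apply/eqP; rewrite eqEproper XY /=.
by apply/negP => /(Xmax Y YF).
Qed.

Lemma plusA_mono (W B B' : {set T}) a : W \in F -> B \in F -> B' \in F -> B != set0 ->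
  B \subset B' -> B' \subset W -> a \in plusA F B W -> a \notin B' -> a \in plusA F B' W.
Proof.
move=> WF + B'F + + B'W; move Hn : #|B' :\: B| => n.
elim: n B Hn => [|n IH] B Hn BF Bne BB' aP aB'.
  suff <- : B = B' by [].
  by apply/eqP; rewrite eqEsubset BB' /= -setD_eq0 -cards_eq0 Hn.
have BB'_proper : B \proper B'.
  by rewrite properEneq BB' andbT; apply/eqP => eBB'; move: Hn; rewrite eBB' setDv cards0.
have [z [/setDP[zB' zB] BzF]] := hSA BF B'F BB'_proper.
move: (aP); rewrite plusAE => /and3P[aW aB BaF].
have BW_proper : B \proper W by rewrite properE (subset_trans BB' B'W); apply/subsetPn; exists a.
have aWB : a \in W :\: B by rewrite inE aB aW.
have zWB : z \in W :\: B by rewrite inE zB (subsetP B'W z zB').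
have BazF := hC BF WF Bne BW_proper aWB zWB BaF BzF.
apply: (IH (B :|: [set z])) => //.
- move: Hn; rewrite (cardsD1 z) inE zB zB' add1n => -[] <-.
  by rewrite setDDl.
- by apply/set0Pn; exists z; rewrite !inE eqxx orbT.
- by rewrite subUset BB' sub1set.
- rewrite plusAE aW !inE negb_or aB /= setUAC -setUA BazF andbT.
  by apply: contraNneq aB' => ->.
Qed.

Lemma setU_plusA (W B D : {set T}) : W \in F -> B \in F -> B != set0 -> B \subset W ->
  D \subset plusA F B W -> B :|: D \in F.
Proof.
move=> WF BF Bne BW; move Hn : #|D| => n.
elim: n D Hn => [|n IH] D Hn DP; first by rewrite (cards0_eq Hn) setU0.
have [d dD] : exists d, d \in D by apply/set0Pn; rewrite -cards_eq0 Hn.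
have D'P : D :\ d \subset plusA F B W := subset_trans (subsetDl _ _) DP.
have D'F : B :|: D :\ d \in F.
  by apply: IH D'P; move: Hn; rewrite (cardsD1 d) dD add1n => -[].
have dP := subsetP DP d dD; move: (dP); rewrite plusAE => /and3P[_ dB _].
have D'W : B :|: D :\ d \subset W.
  by rewrite subUset BW (subset_trans D'P (plusA_subset _ _)).
have dP' : d \in plusA F (B :|: D :\ d) W.
  by apply: plusA_mono dP _ => //; rewrite ?subsetUl // !inE negb_or dB eqxx.
by rewrite -(setD1K dD) setUCA setUC; move: dP'; rewrite plusAE => /and3P[].
Qed.

Lemma chooseP (X A : {set T}) y : choose' lab F X A = Some y ->
  y \in plusA F X A /\ {in plusA F X A, forall z, pair_le (key X y) (key X z)}.
Proof.
rewrite /choose'; case: pickP => [x /andP[xP /forall_inP xmin] [<-]|//].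
by split=> // z zP; apply: xmin.
Qed.

Lemma choose_None (X A : {set T}) : choose' lab F X A = None -> plusA F X A = set0.
Proof.
move=> none; apply/eqP/negPn/negP => /(exists_rel_min
  (r := fun y z => pair_le (key X y) (key X z)) (fun _ _ => pair_le_total _ _)
  (fun _ _ _ => @pair_le_trans _ _ _)) [y yP ymin].
move: none; rewrite /choose'; case: pickP => [//|/(_ y)]; rewrite yP /=.
by move/negbT/negP => notmin _; apply: notmin; apply/forall_inP.
Qed.

Lemma choose_min (X A : {set T}) y : y \in plusA F X A ->
  {in plusA F X A, forall z, pair_le (key X y) (key X z)} -> choose' lab F X A = Some y.
Proof.
move=> yP ymin; case E: choose' => [y'|]; last by move: yP; rewrite (choose_None E) inE.
have [y'P y'min] := chooseP E.
by congr Some; apply: lab_inj; apply: pair_le_anti (y'min _ yP) (ymin _ y'P).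
Qed.

Lemma choose_sub (X A B : {set T}) y : A \subset B -> choose' lab F X B = Some y ->
  y \in A -> choose' lab F X A = Some y.
Proof.
move=> AB /chooseP[yP ymin] yA; apply: choose_min => [|z zP]; first exact: plusA_sub yP yA.
by apply: ymin; apply: plusA_sub zP (subsetP AB z (subsetP (plusA_subset X A) z zP)).
Qed.

Lemma sourceP (X : {set T}) t : source lab F X = Some t ->
  [/\ t \in X, [set t] \in F & {in X, forall y, [set y] \in F -> (lab t <= lab y)%R}].
Proof.
rewrite /source; case: pickP => [x|//] /andP[]; rewrite !inE => /andP[xX xF] /forall_inP xmin [<-].
by split=> // y yX yF; apply: xmin; rewrite !inE yX.
Qed.

Lemma source_set0 : source lab F set0 = None.
Proof. by rewrite /source; case: pickP => // x; rewrite !inE. Qed.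

Lemma source_sub (W X : {set T}) t : source lab F W = Some t -> t \in X -> X \subset W ->
  source lab F X = Some t.
Proof.
move=> /sourceP[tW tF tmin] tX XW; rewrite /source; case: pickP => [x|].
  rewrite !inE => /andP[/andP[xX xF] /forall_inP xmin].
  congr Some; apply: lab_inj; apply/eqP; rewrite eq_le (tmin x (subsetP XW x xX) xF) andbT.
  by apply: xmin; rewrite !inE tX.
move/(_ t); rewrite !inE tX tF /= => /negbT/negP[]; apply/forall_inP => y.
by rewrite !inE => /andP[yX yF]; apply: tmin => //; apply: (subsetP XW).
Qed.

Lemma source_exists (W : {set T}) : W \in F -> W != set0 ->
  exists t, source lab F W = Some t.
Proof.
move=> WF Wne; rewrite -proper0 in Wne.
have [z [/setDP[zW _]]] := hSA F0 WF Wne; rewrite set0U => zF.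
have /(exists_rel_min (r := fun y z => (lab y <= lab z)%R) (fun _ _ => le_total _ _)
  (fun _ _ _ => @le_trans _ _ _ _ _)) [y yP ymin] : W :&: Zset F != set0.
  by apply/set0Pn; exists z; rewrite !inE zW.
rewrite /source; case: pickP => [x _|]; first by exists x.
by move/(_ y); rewrite yP /= => /negbT/negP[]; apply/forall_inP.
Qed.

Lemma layerS (X : {set T}) t m :
  layer F X t m.+1 = layer F X t m :|: (plusA F (layer F X t m) setT :&: X).
Proof. by []. Qed.

Lemma layer_mono (X : {set T}) t m n : m <= n -> layer F X t m \subset layer F X t n.
Proof.
elim: n => [|n IH]; first by rewrite leqn0 => /eqP->.
rewrite leq_eqVlt => /predU1P[->//|]; rewrite ltnS => /IH mn.
by rewrite layerS (subset_trans mn) ?subsetUl.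
Qed.

Lemma layer_t (X : {set T}) t m : t \in layer F X t m.
Proof. by apply: (subsetP (layer_mono X t (leq0n m))); rewrite /layer /= set11. Qed.

Lemma layer_sub (X : {set T}) t m : t \in X -> layer F X t m \subset X.
Proof.
move=> tX; elim: m => [|m IH]; first by rewrite /layer /= sub1set.
by rewrite layerS subUset IH subsetIr.
Qed.

Lemma layer_F (X : {set T}) t m : X \in F -> t \in X -> [set t] \in F -> layer F X t m \in F.
Proof.
move=> XF tX tF; elim: m => [//|m IH]; rewrite layerS.
apply: (setU_plusA XF IH); first by apply/set0Pn; exists t; exact: layer_t.
  exact: layer_sub.
by apply/subsetP => x; rewrite inE => /andP[xP xX]; exact: plusA_sub xP xX.
Qed.

Local Notation N := #|T|.

Lemma lay_t (X : {set T}) t : lay F X t t = 0.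
Proof. by rewrite /lay eqxx. Qed.

Lemma lay_neq (X : {set T}) t y : y != t ->
  lay F X t y = (find (fun i => y \in plusA F (layer F X t i) setT) (iota 0 N.+1)).+1.
Proof. by rewrite /lay => /negbTE ->. Qed.

Lemma lay_bound (X : {set T}) t y : lay F X t y <= N.+2.
Proof.
case: (eqVneq y t) => [->|ny]; first by rewrite lay_t.
by rewrite lay_neq // ltnS (leq_trans (find_size _ _)) ?size_iota.
Qed.

Lemma lay_le_plus (X : {set T}) t y m :
  y \in plusA F (layer F X t m) setT -> lay F X t y <= m.+1.
Proof.
case: (eqVneq y t) => [->|ny]; first by rewrite lay_t.
case: (leqP m N) => [mN yP|Nm _]; last by rewrite (leq_trans (lay_bound X t y)).
rewrite lay_neq // ltnS leqNgt; apply/negP => lt_m.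
by have := before_find 0 lt_m; rewrite nth_iota ?ltnS // add0n yP.
Qed.

Lemma lay_le_layer (X : {set T}) t x m : x \in layer F X t m -> lay F X t x <= m.
Proof.
elim: m => [|m IH]; first by rewrite /layer /= inE => /eqP->; rewrite lay_t.
rewrite layerS inE => /orP[/IH/leqW //|]; rewrite inE => /andP[/lay_le_plus //].
Qed.

Lemma plus_layer_lay (X : {set T}) t y : y != t -> lay F X t y <= N.+1 ->
  y \in plusA F (layer F X t (lay F X t y).-1) setT.
Proof.
move=> ny; rewrite lay_neq // ltnS /=; set p := fun i => _ => found.
have found' : find p (iota 0 N.+1) < size (iota 0 N.+1) by rewrite size_iota ltnS.
by have := nth_find 0 (etrans (has_find _ _) found'); rewrite nth_iota // -(size_iota 0 N.+1).
Qed.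

Lemma layer_agree (W X : {set T}) t i : layer F W t i \subset X -> X \subset W ->
  forall m, m <= i -> layer F X t m = layer F W t m.
Proof.
move=> LX XW; elim=> [//|m IH] lt_mi.
rewrite !layerS (IH (ltnW lt_mi)); congr (_ :|: _); apply/setP => x; rewrite !in_setI.
case xP: (x \in plusA F (layer F W t m) setT) => //=.
apply/idP/idP => [/(subsetP XW)//|xW]; apply: (subsetP LX); apply: (subsetP (layer_mono W t lt_mi)).
by rewrite layerS in_setU in_setI xP xW orbT.
Qed.

Lemma lay_eq_layers (X W : {set T}) t y i :
  (forall k, k <= i -> layer F X t k = layer F W t k) ->
  lay F W t y <= i.+1 -> lay F X t y = lay F W t y.
Proof.
case: (eqVneq y t) => [->|ny] agree; first by rewrite !lay_t.
rewrite !lay_neq // ltnS => bound; congr S; apply: find_agree => k.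
rewrite take_iota mem_iota add0n => /andP[_ /leq_trans/(_ (geq_minl _ _))]; rewrite ltnS => ki.
by rewrite /= agree // (leq_trans ki bound).
Qed.

Lemma lay_sub_agree (W X : {set T}) t y :
  layer F W t (lay F W t y).-1 \subset X -> X \subset W -> lay F X t y = lay F W t y.
Proof. by move=> LX XW; apply: lay_eq_layers (layer_agree LX XW) _; exact: leqSpred. Qed.

Lemma layer_sub_min_outside (W X : {set T}) t x : t \in X -> X \subset W ->
  {in W :\: X, forall z, lay F W t x <= lay F W t z} ->
  layer F W t (lay F W t x).-1 \subset X.
Proof.
move=> tX XW xmin; apply/subsetP => z zL; apply/negPn/negP => zX.
have zWX : z \in W :\: X by rewrite inE zX (subsetP (layer_sub _ (subsetP XW t tX)) z zL).
have nz : z != t by apply: contraNneq zX => ->.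
have := xmin z zWX; have := lay_le_layer zL; have : 0 < lay F W t z by rewrite lay_neq.
lia.
Qed.

Lemma layX_source (X : {set T}) t y : source lab F X = Some t -> layX lab F X y = lay F X t y.
Proof. by rewrite /layX => ->. Qed.

(* Otherwise the element of W \ X of least W-layer, which lies below the layer of y,
   extends X by [plusA_mono] and has the same layer in X, so choose' would prefer it. *)
Lemma lay_choose (W X : {set T}) t y : W \in F -> X \in F -> X \subset W ->
  source lab F X = Some t -> choose' lab F X W = Some y -> lay F X t y = lay F W t y.
Proof.
move=> WF XF XW srcX chy; have [tX tF _] := sourceP srcX.
have [yP ymin] := chooseP chy; move: (yP); rewrite plusAE => /and3P[yW yX _].
have ny : y != t by apply: contraNneq yX => ->.
apply: (lay_sub_agree _ XW); apply/subsetP => x xL; apply/negPn/negP => xX.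
have xWX : x \in W :\: X by rewrite inE xX (subsetP (layer_sub _ (subsetP XW t tX)) x xL).
have [xs xsWX xsmin] := arg_minnP (lay F W t) xWX.
have /setDP[xsW xsX] := xsWX; set m := lay F W t xs in xsmin.
have m_lt : m < lay F W t y.
  have y0 : 0 < lay F W t y by rewrite lay_neq.
  by rewrite (leq_ltn_trans (leq_trans (xsmin x xWX) (lay_le_layer xL))) ?ltn_predL.
have LX := layer_sub_min_outside tX XW xsmin.
have xsP : xs \in plusA F X W.
  have nxs : xs != t by apply: contraNneq xsX => ->.
  have mN : m <= N.+1 by rewrite -ltnS (leq_trans m_lt) ?lay_bound.
  apply: (plusA_mono WF (layer_F m.-1 WF (subsetP XW t tX) tF) XF) => //.
  - by apply/set0Pn; exists t; exact: layer_t.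
  - exact: plusA_sub (plus_layer_lay nxs mN) xsW.
have lay_xs : lay F X t xs = m := lay_sub_agree LX XW.
have lay_y_m : lay F X t y <= m.
  by rewrite -lay_xs; have := pair_le_fst (ymin xs xsP); rewrite /= !(layX_source _ srcX).
have agree k : k <= m.-1 -> layer F W t k = layer F X t k.
  by move=> hk; rewrite (layer_agree LX XW hk).
have := lay_eq_layers agree (leq_trans lay_y_m (leqSpred m)).
by move=> eq_lay; move: m_lt; rewrite eq_lay ltnNge lay_y_m.
Qed.

Definition greedy (W : {set T}) (s : seq T) : Prop :=
  [/\ uniq s, 0 < size s, {subset s <= W},
      forall k, 0 < k <= size s -> [set x in take k s] \in F &
      forall k x0, 0 < k < size s -> choose' lab F [set x in take k s] W = Some (nth x0 s k)].

Lemma set_take_nth (s : seq T) k x0 : k < size s ->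
  [set x in take k.+1 s] = [set x in take k s] :|: [set nth x0 s k].
Proof. by move=> lt_k; rewrite (take_nth x0 lt_k); apply/setP => x; rewrite !inE mem_rcons inE orbC. Qed.

Lemma greedy_plusA (W : {set T}) s k x0 : greedy W s -> 0 < k < size s ->
  nth x0 s k \in plusA F [set x in take k s] W.
Proof. by move=> [_ _ _ _ sC] /(sC _ x0)/chooseP[]. Qed.

Lemma greedy_rcons (W : {set T}) s y : greedy W s ->
  choose' lab F [set x in s] W = Some y -> greedy W (rcons s y).
Proof.
move=> [us s0 sW sF sC] chy; have [yP _] := chooseP chy.
move: yP; rewrite plusAE inE => /and3P[yW ys ysF].
have take_rcons k : k <= size s -> take k (rcons s y) = take k s.
  by move=> le_k; rewrite -cats1 takel_cat.
split.
- by rewrite rcons_uniq ys us.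
- by rewrite size_rcons.
- by move=> x; rewrite mem_rcons inE => /predU1P[->|/sW].
- move=> k /andP[k0]; rewrite size_rcons leq_eqVlt ltnS => /predU1P[->|le_k].
    suff -> : [set x in take (size s).+1 (rcons s y)] = [set x in s] :|: [set y] by [].
    by rewrite take_oversize ?size_rcons //; apply/setP => x; rewrite !inE mem_rcons inE orbC.
  by rewrite take_rcons // sF ?k0.
- move=> k x0 /andP[k0]; rewrite size_rcons ltnS leq_eqVlt => /predU1P[->|lt_k].
    by rewrite take_rcons // take_size nth_rcons ltnn eqxx.
  by rewrite take_rcons ?(ltnW lt_k) // nth_rcons lt_k (sC _ x0) // k0.
Qed.

Lemma greedy_full (W : {set T}) s : W \in F -> greedy W s ->
  choose' lab F [set x in s] W = None -> [set x in s] = W.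
Proof.
move=> WF [_ s0 sW sF _] /choose_None plus0; apply: (plusA_eq0_sub _ WF _ plus0).
  by have := sF (size s); rewrite take_size s0 leqnn; apply.
by apply/subsetP => x; rewrite inE => /sW.
Qed.

Lemma greedy_large (W : {set T}) s : greedy W s -> #|W| <= size s -> [set x in s] = W.
Proof.
move=> [us _ sW _ _] large; apply/eqP; rewrite eqEcard cardsE (card_uniqP us) large andbT.
by apply/subsetP => x; rewrite inE => /sW.
Qed.

Lemma canon_from_greedy (W : {set T}) fuel s : W \in F -> greedy W s ->
  #|W| <= size s + fuel ->
  [/\ greedy W (canon_from lab F W fuel s), [set x in canon_from lab F W fuel s] = W &
      exists r, canon_from lab F W fuel s = s ++ r].
Proof.
move=> WF; elim: fuel s => [|fuel IH] s gs bound.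
  rewrite addn0 in bound.
  by split=> //; [exact: greedy_large | exists [::]; rewrite cats0].
rewrite /=; case chs: choose' => [y|]; last first.
  by split=> //; [exact: greedy_full | exists [::]; rewrite cats0].
have bound' : #|W| <= size (rcons s y) + fuel by rewrite size_rcons addSnnS.
have [g e [r er]] := IH _ (greedy_rcons gs chs) bound'.
by split=> //; exists (y :: r); rewrite er cat_rcons.
Qed.

Lemma canon_props (W : {set T}) t : W \in F -> source lab F W = Some t ->
  [/\ greedy W (canon lab F W), [set x in canon lab F W] = W, size (canon lab F W) = #|W| &
      exists r, canon lab F W = t :: r].
Proof.
move=> WF srcW; have [tW tF _] := sourceP srcW.
have g0 : greedy W [:: t].
  split=> //; first by move=> x; rewrite inE => /eqP->.
    by case=> [|[|]] //= _; rewrite set_cons set_nil setU0.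
  by move=> [|[|]].
have [g e [r er]] := canon_from_greedy (fuel := #|T|) WF g0 (leq_trans (max_card _) (leqnSn _)).
rewrite /canon srcW; split=> //; last by exists r.
by case: g => u _ _ _ _; rewrite -[in RHS]e cardsE (card_uniqP u).
Qed.

Lemma lay_greedy (W : {set T}) t c i x0 : W \in F -> source lab F W = Some t -> greedy W c ->
  nth x0 c 0 = t -> 0 < i < size c ->
  lay F W t (nth x0 c i) = layX lab F [set x in take i c] (nth x0 c i).
Proof.
move=> WF srcW [_ _ cW cF cC] c0 /andP[i0 ic].
have ti : t \in [set x in take i c].
  by rewrite inE -c0 -(nth_take x0 i0) mem_nth // size_takel // ltnW.
have sub : [set x in take i c] \subset W.
  by apply/subsetP => x; rewrite inE => /mem_take/cW.
have srcX := source_sub srcW ti sub.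
rewrite (layX_source _ srcX) (lay_choose WF _ sub srcX) //.
  by apply: cF; rewrite i0 ltnW.
by apply: cC; rewrite i0.
Qed.

Definition complete_step (A Y : {set T}) : {set T} :=
  if choose' lab F Y A is Some y then Y :|: [set y] else Y.

Lemma iter_complete_step_mono (A X : {set T}) m n : m <= n ->
  iter m (complete_step A) X \subset iter n (complete_step A) X.
Proof.
elim: n => [|n IH]; first by rewrite leqn0 => /eqP->.
rewrite leq_eqVlt => /predU1P[->//|]; rewrite ltnS => /IH mn.
rewrite iterS (subset_trans mn) // /complete_step.
by case: choose' => [y|]; rewrite ?subsetUl.
Qed.

Lemma iter_complete_step_F (A X : {set T}) n : X \in F ->
  iter n (complete_step A) X \in F /\
  (n <= #|iter n (complete_step A) X| \/ plusA F (iter n (complete_step A) X) A = set0).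
Proof.
move=> XF; elim: n => [|n [YF IH]]; first by split=> //; left.
rewrite iterS /complete_step; set Y := iter n _ X in YF IH *.
case chY: choose' => [y|]; last by split=> //; right; exact: choose_None.
have [yP _] := chooseP chY; move: (yP); rewrite plusAE => /and3P[_ yY YyF].
split=> //; case: IH => [le_n|plus0]; last by move: yP; rewrite plus0 inE.
by left; rewrite setUC cardsU1 yY add1n ltnS.
Qed.

Lemma complete_maximal (X : {set T}) : X \in F -> maximal F (complete' lab F X setT).
Proof.
move=> XF; have [YF [full|plus0]] := iter_complete_step_F setT #|T| XF.
  apply: plusA_eq0_maximal YF _; apply/eqP; rewrite -subset0; apply/subsetP => a.
  rewrite plusAE => /and3P[_ aY _]; have := cardsC (iter #|T| (complete_step setT) X).
  have : 0 < #|~: iter #|T| (complete_step setT) X|.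
    by rewrite card_gt0; apply/set0Pn; exists a; rewrite inE.
  by move: full; lia.
exact: plusA_eq0_maximal YF plus0.
Qed.

(* Beyond the prefix X, a greedy order of complete'(X, U) within itself follows the choices
   that complete' made within the whole ground set. *)
Lemma complete_greedy (X : {set T}) c j :
  greedy (complete' lab F X setT) c -> size c <= N -> 0 < j -> [set x in take j c] = X ->
  forall r x0, j <= r < size c -> choose' lab F [set x in take r c] setT = Some (nth x0 c r).
Proof.
move=> [_ _ _ _ cC] cN j0 cX r x0 /andP[jr rc].
have next n : j + n < size c -> iter n (complete_step setT) X = [set x in take (j + n) c] ->
    choose' lab F [set x in take (j + n) c] setT = Some (nth x0 c (j + n)).
  move=> lt_n iterE.
  have chT : choose' lab F [set x in take (j + n) c] (complete' lab F X setT)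
      = Some (nth x0 c (j + n)) by apply: cC; rewrite lt_n addn_gt0 j0.
  case chU: choose' => [y|]; last first.
    have [cP _] := chooseP chT.
    by move: (plusA_sub cP (in_setT _)); rewrite (choose_None chU) inE.
  rewrite -chT; apply/esym/(choose_sub (subsetT _) chU).
  have n1N : n.+1 <= N by apply: leq_trans cN; apply: leq_trans lt_n; rewrite ltnS leq_addl.
  apply: (subsetP (iter_complete_step_mono setT X n1N)).
  by rewrite iterS iterE /complete_step chU !inE eqxx orbT.
have iterE n : j + n <= size c -> iter n (complete_step setT) X = [set x in take (j + n) c].
  elim: n => [|n IH] le_n; first by rewrite addn0.
  have lt_n : j + n < size c by rewrite -addnS.
  have iter_n := IH (ltnW lt_n).
  by rewrite iterS iter_n /complete_step (next n lt_n iter_n) addnS (set_take_nth x0 lt_n).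
by rewrite -(subnKC jr); apply: next; rewrite subnKC // iterE ?subnKC // ltnW.
Qed.

Lemma canon_pairsE (W : {set T}) x0 : W \in F -> W != set0 ->
  canon_pairs lab F W = [seq key [set x in take i (canon lab F W)] (nth x0 (canon lab F W) i)
                          | i <- iota 0 (size (canon lab F W))].
Proof.
move=> WF Wne; have [t srcW] := source_exists WF Wne.
have [gW _ _ [r cW]] := canon_props WF srcW.
have c0 : nth x0 (canon lab F W) 0 = t by rewrite cW.
have hd x : head x (canon lab F W) = t by rewrite cW.
rewrite /canon_pairs; apply: (@eq_from_nth _ (0, 0%R)) => [|i]; rewrite !size_map ?size_iota //.
move=> lt_i; rewrite (nth_map x0) // (nth_map 0) ?size_iota // nth_iota // add0n hd.
case: (posnP i) => [->|i0]; last by rewrite (lay_greedy WF srcW gW) // i0.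
by rewrite c0 lay_t take0 set_nil /layX source_set0.
Qed.

Lemma prec'_canon (W1 W2 : {set T}) x0 : maximal F W1 -> maximal F W2 -> W1 != W2 ->
  W1 != set0 -> W2 != set0 ->
  (forall k, k < size (canon lab F W1) -> k < size (canon lab F W2) ->
     take k (canon lab F W1) = take k (canon lab F W2) ->
     pair_le (key [set x in take k (canon lab F W2)] (nth x0 (canon lab F W1) k))
             (key [set x in take k (canon lab F W2)] (nth x0 (canon lab F W2) k))) ->
  prec' lab F W1 W2.
Proof.
move=> max1 max2 W12 W1ne W2ne key_le; have [[W1F _] [W2F _]] := (max1, max2).
rewrite /prec' W12 (canon_pairsE x0 W1F W1ne) (canon_pairsE x0 W2F W2ne) /=.
have [t1 /(canon_props W1F)[_ set_c1 _ _]] := source_exists W1F W1ne.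
have [t2 /(canon_props W2F)[_ set_c2 _ _]] := source_exists W2F W2ne.
set c1 := canon lab F W1 in key_le set_c1 *; set c2 := canon lab F W2 in key_le set_c2 *.
have [k [k1 k2 tk mis]] := first_mismatch c1 c2 x0.
have sub_of_take (c c' : seq T) : k = size c -> take k c = take k c' ->
    [set x in c] \subset [set x in c'].
  move=> -> tc; apply/subsetP => x; rewrite !inE -{1}(take_size c) tc; exact: mem_take.
have lt1 : k < size c1.
  rewrite ltn_neqAle k1 andbT; apply/eqP => e; move/eqP: W12; apply.
  by apply: maximal_sub_eq max1 W2F _; rewrite -set_c1 -set_c2 sub_of_take.
have lt2 : k < size c2.
  rewrite ltn_neqAle k2 andbT; apply/eqP => e; move/eqP: W12; apply; apply/esym.
  by apply: maximal_sub_eq max2 W1F _; rewrite -set_c1 -set_c2 sub_of_take.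
have neq_k : nth x0 c1 k != nth x0 c2 k.
  by case: mis => [e|e|//]; [rewrite e ltnn in lt1 | rewrite e ltnn in lt2].
apply: (@seq_lt_take _ _ k (0, 0%R)); rewrite ?size_map ?size_iota //.
  rewrite -!map_take !take_iota (minn_idPl (ltnW lt1)) (minn_idPl (ltnW lt2)).
  apply/eq_in_map => i; rewrite mem_iota add0n /= => lt_i.
  rewrite -(take_takel c1 (ltnW lt_i)) -(take_takel c2 (ltnW lt_i)) tk.
  by rewrite -(nth_take x0 lt_i) tk nth_take.
rewrite !(nth_map 0) ?size_iota // !nth_iota // add0n tk.
apply: pair_le_neq_lt; first exact: key_le.
by apply: contra neq_k => /eqP/lab_inj->.
Qed.

Lemma prefix_set_F (W : {set T}) j : W \in F -> W != set0 -> 0 < j <= #|W| ->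
  prefix_set lab F W j \in F.
Proof.
move=> WF Wne j_range; have [t srcW] := source_exists WF Wne.
have [[_ _ _ cF _] _ sizeW _] := canon_props WF srcW.
by apply: cF; rewrite sizeW.
Qed.

Lemma source_in_prefix (W : {set T}) t j : W \in F -> source lab F W = Some t -> 0 < j ->
  t \in prefix_set lab F W j.
Proof.
move=> WF srcW j0; have [_ _ _ [r cW]] := canon_props WF srcW.
by rewrite /prefix_set inE cW -(prednK j0) mem_head.
Qed.

(* At the first position k where the orders of T := complete'(S[j], U) and S diverge, the
   element of T was chosen from the prefix X = S[k] among candidates that include the k-th
   element of S: within T while k < j, within U afterwards. *)
Lemma complete_prefix_key_le (S : {set T}) j x0 : maximal F S -> S != set0 -> 0 < j <= #|S| ->
  let Tc := complete' lab F (prefix_set lab F S j) setT in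
  forall k, k < size (canon lab F Tc) -> k < size (canon lab F S) ->
    take k (canon lab F Tc) = take k (canon lab F S) ->
    pair_le (key [set x in take k (canon lab F S)] (nth x0 (canon lab F Tc) k))
            (key [set x in take k (canon lab F S)] (nth x0 (canon lab F S) k)).
Proof.
move=> [SF _] Sne j_range Tc k kT kS tk; have /andP[j0 jS] := j_range.
have [t srcS] := source_exists SF Sne.
have [gS _ sizeS [rS cS]] := canon_props SF srcS.
have PF := prefix_set_F SF Sne j_range.
have tP := source_in_prefix SF srcS j0.
have [TcF _] := complete_maximal PF.
have PTc : prefix_set lab F S j \subset Tc := iter_complete_step_mono _ _ (leq0n N).
have Tcne : Tc != set0 by apply/set0Pn; exists t; exact: (subsetP PTc).
have [t' srcT] := source_exists TcF Tcne.
have [gT _ sizeT [rT cT]] := canon_props TcF srcT.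
case: (posnP k) => [k0|k0].
  have [_ _ t'min] := sourceP srcT; have [_ tF _] := sourceP srcS.
  rewrite k0 cT cS /= set_nil /layX source_set0 /pair_le ltnn eqxx /=.
  exact: t'min (subsetP PTc t tP) tF.
have vP : nth x0 (canon lab F S) k \in plusA F [set x in take k (canon lab F S)] S.
  by apply: greedy_plusA gS _; rewrite k0 kS.
suff [A chA vA] : exists2 A, choose' lab F [set x in take k (canon lab F S)] A
    = Some (nth x0 (canon lab F Tc) k) & nth x0 (canon lab F S) k \in A.
  by have [_ umin] := chooseP chA; apply: umin; exact: plusA_sub vP vA.
case: (ltnP k j) => [kj|jk].
  exists Tc; first by case: gT => _ _ _ _ cC; rewrite -tk (cC _ x0) // k0 kT.
  by apply: (subsetP PTc); rewrite inE -(nth_take x0 kj) mem_nth // size_takel // sizeS.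
exists setT => //; rewrite -tk (complete_greedy gT _ j0 _ x0) ?jk ?kT //.
  by rewrite sizeT max_card.
by rewrite -(take_takel _ jk) tk take_takel.
Qed.

End LayeredGreedy.

Theorem mainTheorem7 (T : finType) (lab : T -> int) (F : {set {set T}})
  (lab_inj : injective lab) (F0 : set0 \in F)
  (hSA : strongly_accessible F) (hC : commutable F)
  (S : {set T}) (hS : maximal F S) (hSne : S != set0)
  (j : nat) (hj1 : (1 <= j)%N) (hj2 : (j <= #|S|)%N) :
  maximal F (complete' lab F (prefix_set lab F S j) setT) /\
  preceq' lab F (complete' lab F (prefix_set lab F S j) setT) S.
Proof.
have [SF _] := hS.
have j_range : 0 < j <= #|S| by rewrite hj1 hj2.
have [t srcS] := source_exists lab F0 hSA SF hSne.
have PF := prefix_set_F lab F0 hSA SF hSne j_range.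
set Tc := complete' lab F (prefix_set lab F S j) setT.
have Tmax : maximal F Tc := complete_maximal lab F0 hSA PF.
have PTc : prefix_set lab F S j \subset Tc := iter_complete_step_mono lab F _ _ (leq0n #|T|).
have Tcne : Tc != set0.
  by apply/set0Pn; exists t; apply: (subsetP PTc); exact: (source_in_prefix F0 hSA SF srcS hj1).
split=> //; rewrite /preceq'; case: (eqVneq Tc S) => [_|TS]; rewrite ?orbT // orbF.
apply: (prec'_canon lab_inj F0 hSA hC (x0 := t)) => //.
exact (complete_prefix_key_le lab_inj F0 hSA t hS hSne j_range).
Qed.
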